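(* Let $d\ge1$ and let $Z_1,Z_2$ be two nonzero $d$-cycles over the vertex set $[d+4]$. Then there is a $(d-1)$-simplex belonging to both $K(\mathrm{Supp}(Z_1))$ and $K(\mathrm{Supp}(Z_2))$.
   Context: Fix a field $\mathbb F$. A $d$-simplex is a $(d+1)$-element subset of the vertex set, oriented by increasing order $s_1<\dots<s_{d+1}$. A $d$-chain is a formal $\mathbb F$-combination of $d$-simplices with support the set of simplices with nonzero coefficient; $\partial\sigma=\sum_i(-1)^{i-1}(\sigma\setminus\{s_i\})$ extended linearly; a $d$-cycle is a $d$-chain $Z$ with $\partial Z=0$. For a set $S$ of simplices, $K(S)$ is the complex of all subsets of members of $S$. *)

From HB Require Import structures.
From mathcomp Require Import all_boot all_order all_algebra.
Set Implicit Arguments. Unset Strict Implicit. Unset Printing Implicit Defensive.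
Import GRing.Theory.
Local Open Scope ring_scope.

(* Vertex set [n] is 'I_n; a simplex is a finite subset {set 'I_n};
   a chain is a function from simplices to the field F (finitely supported
   automatically since there are finitely many simplices). *)
Definition chain (F : fieldType) (n : nat) := {ffun {set 'I_n} -> F}.

Definition is_dchain (F : fieldType) (n d : nat) (c : chain F n) : Prop :=
  forall s : {set 'I_n}, c s != 0 -> #|s| = d.+1.

(* 0-based position of v in sigma under increasing order: i-1 where v = s_i *)
Definition pos (n : nat) (sigma : {set 'I_n}) (v : 'I_n) : nat :=
  #|[set u in sigma | (u < v)%N]|.

(* boundary: extend  d sigma = sum_i (-1)^(i-1) (sigma \ {s_i})  linearly *)
Definition boundary (F : fieldType) (n : nat) (c : chain F n) : chain F n :=
  [ffun tau : {set 'I_n} =>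
     \sum_(sigma : {set 'I_n})
        \sum_(v in sigma | sigma :\ v == tau)
           (-1) ^+ pos sigma v * c sigma].

Definition is_dcycle (F : fieldType) (n d : nat) (c : chain F n) : Prop :=
  is_dchain d c /\ boundary c = 0.

Definition supp (F : fieldType) (n : nat) (c : chain F n) : {set {set 'I_n}} :=
  [set s | c s != 0].

Definition in_K (n : nat) (S : {set {set 'I_n}}) (tau : {set 'I_n}) : Prop :=
  exists2 s, s \in S & tau \subset s.

(* Complementation turns the support of a d-cycle on d+4 vertices into a family of
   3-sets. Since the boundary vanishes on a face s :\ v of a support simplex s, some
   other simplex w |: (s :\ v) lies in the support; for the complements this is an
   exchange property. Two exchange-closed families of sets of size at least two
   always contain members A, B sharing two points, so #|A :|: B| <= 4 and any d
   vertices outside A :|: B span a common face of the simplices ~: A and ~: B. *)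

From mathcomp Require Import all_boot all_algebra zify.
Import GRing.Theory.
Local Open Scope ring_scope.

Set Implicit Arguments.
Unset Strict Implicit.
Unset Printing Implicit Defensive.

Lemma setC_U1D1 (T : finType) (A : {set T}) v w :
  v != w -> ~: (v |: (A :\ w)) = w |: (~: A :\ v).
Proof.
move=> vw; apply/setP => x; rewrite !inE.
by have [->|_] := eqVneq x w; [rewrite /= orbF eq_sym | case: eqVneq].
Qed.

Lemma exists_subset_card (T : finType) (S : {set T}) k :
  (k <= #|S|)%N -> exists2 t : {set T}, t \subset S & #|t| = k.
Proof.
rewrite -bin_gt0 -cards_draws => /card_gt0P[t].
by rewrite inE => /andP[tS /eqP]; exists t.
Qed.

Section ExchangeClosedFamilies.
Local Open Scope nat_scope.
Variable T : finType.
Implicit Types (A B : {set T}) (P Q : {set T} -> Prop).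

Definition exchange_closed P :=
  forall A, P A -> forall v, v \notin A -> exists2 w, w \in A & P (v |: (A :\ w)).

Lemma card_setI_ltP A B : #|A :&: B| < #|A| -> exists2 a, a \in A & a \notin B.
Proof.
move=> ltIA; have: 0 < #|A :\: B| by have := cardsID B A; lia.
by case/card_gt0P=> a /setDP[]; exists a.
Qed.

Section Meet.
Variables P Q : {set T} -> Prop.
Hypotheses (exP : exchange_closed P) (exQ : exchange_closed Q).
Hypotheses (cardP : forall A, P A -> 1 < #|A|) (cardQ : forall B, Q B -> 1 < #|B|).

Definition meet_twice := exists A, exists2 B, P A /\ Q B & 1 < #|A :&: B|.

Lemma exchange_meet_from_single A B : P A -> Q B -> #|A :&: B| = 1 -> meet_twice.
Proof.
move=> PA QB AB1; move/eqP/cards1P: AB1 => [x ABx].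
have /setIP[xA xB] : x \in A :&: B by rewrite ABx set11.
have [b bB bA] : exists2 b, b \in B & b \notin A.
  by apply: card_setI_ltP; rewrite setIC ABx cards1 cardQ.
have [a aA aB] : exists2 a, a \in A & a \notin B.
  by apply: card_setI_ltP; rewrite ABx cards1 cardP.
have [w wA PA'] := exP PA bA; have [u uB QB'] := exQ QB aB.
have bx : b != x by apply: contraNneq bA => ->.
have ax : a != x by apply: contraNneq aB => ->.
(* Unless both exchanges evict [x], one of them keeps [x] and gains a second common point. *)
have [wx|wx] := eqVneq w x; last first.
  exists (b |: (A :\ w)), B => //; apply/card_gt1P; exists b, x.
  by rewrite !inE eqxx bB xA xB [x == w]eq_sym wx bx orbT.
have [ux|ux] := eqVneq u x; last first.
  exists A, (a |: (B :\ u)) => //; apply/card_gt1P; exists a, x.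
  by rewrite !inE eqxx aA xA xB [x == u]eq_sym ux ax orbT.
exists (b |: (A :\ w)), (a |: (B :\ u)) => //; apply/card_gt1P; exists a, b.
rewrite !inE !eqxx aA bB wx ux ax bx !orbT; split=> //.
by apply: contraNneq aB => ->.
Qed.

Lemma exchange_meet_twice A B : P A -> Q B -> meet_twice.
Proof.
have from_meet A0 : P A0 -> 0 < #|A0 :&: B| -> Q B -> meet_twice.
  move=> PA0 AB0 QB; have [AB2|AB1] := ltnP 1 #|A0 :&: B|; first by exists A0, B.
  by apply: (exchange_meet_from_single PA0 QB); lia.
move=> PA QB; have [|AB0] := posnP #|A :&: B|; last exact: from_meet PA AB0 QB.
move/eqP; rewrite cards_eq0 => /eqP AB0.
have [b bB] : exists b, b \in B by apply/card_gt0P; have := cardQ QB; lia.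
have bA : b \notin A by apply/negP => bA; have := in_set0 b; rewrite -AB0 inE bA bB.
have [w wA PA'] := exP PA bA.
by apply: from_meet PA' _ QB; apply/card_gt0P; exists b; rewrite !inE eqxx bB.
Qed.

End Meet.
End ExchangeClosedFamilies.

Section Chains.
Variables (F : fieldType) (n : nat).
Implicit Types (Z : chain F n) (s : {set 'I_n}).

Lemma chain_neq0 Z : Z != 0 -> exists s, Z s != 0.
Proof.
move=> nzZ; apply/existsP; apply: contraNT nzZ => /existsPn Z0.
by apply/eqP/ffunP => s; rewrite ffunE; apply/eqP/negPn/Z0.
Qed.

Lemma boundary_setD1 Z s v : v \in s ->
  (forall w, w \notin s -> Z (w |: (s :\ v)) = 0) ->
  boundary Z (s :\ v) = (-1) ^+ pos s v * Z s.
Proof.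
move=> vs Z0; rewrite ffunE (bigD1 s) //= [X in _ + X]big1 ?addr0; last first.
  move=> sg sgs; apply: big1 => u /andP[usg /eqP sgu].
  have sgE : sg = u |: (s :\ v) by rewrite -sgu setD1K.
  have [uv|uv] := eqVneq u v; first by move: sgs; rewrite sgE uv setD1K ?eqxx.
  have us : u \notin s.
    by apply/negP => us; have := setD11 u sg; rewrite sgu !inE uv us.
  by rewrite sgE Z0 ?mulr0.
rewrite (bigD1 v) /= ?vs ?eqxx // big1 ?addr0 // => u /andP[/andP[us /eqP suv] uv].
by have := setD11 v s; rewrite -suv !inE eq_sym uv vs.
Qed.

Lemma boundary0_exchange Z : boundary Z = 0 ->
  forall s, Z s != 0 -> forall v, v \in s ->
  exists2 w, w \notin s & Z (w |: (s :\ v)) != 0.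
Proof.
move=> bZ s Zs v vs.
have [w /andP[ws Zw] | noW] := pickP [pred w | (w \notin s) && (Z (w |: (s :\ v)) != 0)].
  by exists w.
have Z0 w : w \notin s -> Z (w |: (s :\ v)) = 0.
  by move=> ws; have := noW w; rewrite /= ws /= => /negbT/negbNE/eqP.
have := boundary_setD1 vs Z0; rewrite bZ ffunE => /esym/eqP.
by rewrite mulf_eq0 signr_eq0 (negbTE Zs).
Qed.

Lemma compl_supp_exchange_closed Z :
  boundary Z = 0 -> exchange_closed (fun A => Z (~: A) != 0).
Proof.
move=> bZ A ZA v vA.
have [|w] := boundary0_exchange bZ ZA (v := v); first by rewrite inE.
rewrite inE negbK => wA Zw; exists w => //.
by rewrite setC_U1D1 //; apply: contraNneq vA => ->.
Qed.

Lemma card_compl_supp d Z A : is_dchain d Z -> Z (~: A) != 0 -> (#|A| + d.+1)%N = n.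
Proof. by move=> cZ /cZ <-; rewrite cardsC card_ord. Qed.

End Chains.

Theorem mainTheorem13 (F : fieldType) (d : nat) (hd : (1 <= d)%N)
  (Z1 Z2 : chain F (d + 4))
  (c1 : is_dcycle d Z1) (c2 : is_dcycle d Z2)
  (nz1 : Z1 != 0) (nz2 : Z2 != 0) :
  exists tau : {set 'I_(d + 4)},
    #|tau| = d /\ in_K (supp Z1) tau /\ in_K (supp Z2) tau.
Proof.
have card3 (Z : chain F (d + 4)) : is_dcycle d Z -> forall A, Z (~: A) != 0 -> #|A| = 3%N.
  by move=> [cZ _] A /(card_compl_supp cZ) cardA; lia.
have gt1 (Z : chain F (d + 4)) : is_dcycle d Z -> forall A, Z (~: A) != 0 -> (1 < #|A|)%N.
  by move=> cZ A /(card3 _ cZ) ->.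
have compl_nz (Z : chain F (d + 4)) : Z != 0 -> exists A, Z (~: A) != 0.
  by case/chain_neq0 => s Zs; exists (~: s); rewrite setCK.
have [[A0 ZA0] [B0 ZB0]] := (compl_nz _ nz1, compl_nz _ nz2).
have [A [B [ZA ZB] AB2]] := exchange_meet_twice (compl_supp_exchange_closed c1.2)
  (compl_supp_exchange_closed c2.2) (gt1 _ c1) (gt1 _ c2) ZA0 ZB0.
have : (d <= #|~: (A :|: B)|)%N.
  have := cardsUI A B; have := cardsC (A :|: B).
  by rewrite card_ord (card3 _ c1 _ ZA) (card3 _ c2 _ ZB); lia.
case/exists_subset_card => tau tAB ctau; exists tau; split=> //; split.
- exists (~: A); first by rewrite inE.
  by apply: subset_trans tAB _; rewrite setCS subsetUl.
- exists (~: B); first by rewrite inE.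
  by apply: subset_trans tAB _; rewrite setCS subsetUr.
Qed.
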